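(* Let $\sigma>0$, $a>0$, $m\in\mathbb R$, and $u_0(x)=\sqrt{\frac{a}{2\pi}}e^{-\frac a2(x-m)^2}$. Then the solution $u$ of $$\partial_t u=\sigma^2\partial_{xx}u+\Big(x^2-\int_{\mathbb R}y^2u(t,y)\,dy\Big)u,\quad x\in\mathbb R,\qquad u(0,\cdot)=u_0,$$ remains Gaussian for $0<t<T:=\frac{\arctan(a\sigma)}{2\sigma}$ and is given by $$u(t,x)=\sqrt{\frac{a(t)}{2\pi}}e^{-\frac{a(t)}{2}(x-m(t))^2},\quad a(t):=\frac{a\sigma-\tan(2\sigma t)}{\sigma(1+a\sigma\tan(2\sigma t))},\quad m(t):=\frac{ma\sigma}{a\sigma\cos(2\sigma t)-\sin(2\sigma t)}.$$
   Context: The solution of the equation is understood to exist as long as the nonlocal term $\int_{\mathbb R}x^2u(t,x)\,dx$ is finite. *)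

From Stdlib Require Import Reals Lra.
From Coquelicot Require Import Coquelicot.
Open Scope R_scope.

Definition gaussian (a m x : R) : R :=
  sqrt (a / (2 * PI)) * exp (- (a / 2) * (x - m) ^ 2).

Definition u0 (a m : R) : R -> R := gaussian a m.

Definition a_t (sigma a t : R) : R :=
  (a * sigma - tan (2 * sigma * t)) / (sigma * (1 + a * sigma * tan (2 * sigma * t))).

Definition m_t (sigma a m t : R) : R :=
  m * a * sigma / (a * sigma * cos (2 * sigma * t) - sin (2 * sigma * t)).

Definition u_explicit (sigma a m : R) (t x : R) : R :=
  gaussian (a_t sigma a t) (m_t sigma a m t) x.

Definition is_solution (sigma T : R) (v0 : R -> R) (u : R -> R -> R) : Prop :=
  (forall x, u 0 x = v0 x) /\
  (forall x, filterlim (fun t => u t x) (at_right 0) (locally (v0 x))) /\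
  (forall t, 0 < t < T ->
     exists (I : R) (ux : R -> R) (uxx : R -> R),
       is_RInt_gen (fun y => y ^ 2 * u t y)
                   (Rbar_locally m_infty) (Rbar_locally p_infty) I /\
       (forall x, is_derive (fun y => u t y) x (ux x)) /\
       (forall x, is_derive ux x (uxx x)) /\
       (forall x, is_derive (fun s => u s x) t
                    (sigma ^ 2 * uxx x + (x ^ 2 - I) * u t x))).

From Stdlib Require Import Reals Lra FunctionalExtensionality.
From Coquelicot Require Import Coquelicot.
Open Scope R_scope.

(* Since the nonlocal term of a Gaussian with precision a and mean m is its second
   moment m^2 + 1/a, the Gaussian ansatz reduces the equation to the ODEs
   a' = -2 (1 + sigma^2 a^2) and m' = 2 m / a.  The given a(t) is a Moebius image of
   tan (2 sigma t) and solves the Riccati equation, m(t) solves the linear one, and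
   both stay finite with a(t) > 0 as long as tan (2 sigma t) < a sigma, i.e. up to T.
   The moments rest on the Gaussian integral, which comes from the identity
   (int_0^x e^(-s^2) ds)^2 + int_0^1 e^(-x^2 (1+t^2)) / (1+t^2) dt = pi/4:
   its left-hand side has zero derivative, and the second term vanishes at infinity. *)

Lemma is_derive_0_const (f : R -> R) (x : R) :
  (forall y, is_derive f y 0) -> f x = f 0.
Proof.
  intros hf.
  destruct (MVT_cor4 f (fun _ => 0) 0 (Rabs (x - 0)) (fun c _ => hf c) x (Rle_refl _))
    as [c [e _]].
  lra.
Qed.

Lemma is_RInt_gen_antiderivative (F f : R -> R) (la lb : R) :
  (forall x, is_derive F x (f x)) -> (forall x, continuous f x) ->
  is_lim F m_infty la -> is_lim F p_infty lb ->
  is_RInt_gen f (Rbar_locally m_infty) (Rbar_locally p_infty) (lb - la).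
Proof.
  intros hF hf hm hp.
  assert (e : Derive F = f).
  { apply functional_extensionality. intros x. apply is_derive_unique, hF. }
  rewrite <- e. apply is_RInt_gen_Derive; auto.
  - apply filter_forall. intros _ x _. eexists; apply hF.
  - apply filter_forall. intros _ x _. rewrite e. apply hf.
Qed.

Lemma is_lim_sqr_infty (l : Rbar) :
  l = p_infty \/ l = m_infty -> is_lim (fun z => z ^ 2) l p_infty.
Proof.
  intros hl.
  apply (is_lim_ext (fun z => z * z)). { intros z. ring. }
  destruct hl as [-> | ->].
  - exact (is_lim_mult id id p_infty p_infty p_infty (is_lim_id _) (is_lim_id _) I).
  - exact (is_lim_mult id id m_infty m_infty m_infty (is_lim_id _) (is_lim_id _) I).
Qed.

Lemma is_lim_exp_neg_sqr (l : Rbar) :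
  l = p_infty \/ l = m_infty -> is_lim (fun z => exp (- z ^ 2)) l 0.
Proof.
  intros hl.
  apply (is_lim_comp exp (fun z => - z ^ 2) l 0 m_infty); [apply is_lim_exp_m | |].
  - apply (is_lim_opp (fun z => z ^ 2) l p_infty), is_lim_sqr_infty, hl.
  - apply filter_forall. discriminate.
Qed.

Lemma is_lim_affine_mul_exp_neg_sqr (p q : R) (l : Rbar) :
  l = p_infty \/ l = m_infty -> is_lim (fun z => (p * z + q) * exp (- z ^ 2)) l 0.
Proof.
  intros hl.
  assert (hw : is_lim (fun z => - z ^ 2 * exp (- z ^ 2)) l 0).
  { apply (is_lim_comp (fun w => w * exp w) (fun z => - z ^ 2) l 0 m_infty).
    - apply is_lim_mul_exp_m.
    - apply (is_lim_opp (fun z => z ^ 2) l p_infty), is_lim_sqr_infty, hl.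
    - apply filter_forall. discriminate. }
  assert (hinv : is_lim (fun z => / z) l 0).
  { destruct hl as [-> | ->].
    - exact (is_lim_inv id p_infty p_infty (is_lim_id _) ltac:(discriminate)).
    - exact (is_lim_inv id m_infty m_infty (is_lim_id _) ltac:(discriminate)). }
  assert (hz : is_lim (fun z => z * exp (- z ^ 2)) l 0).
  { apply (is_lim_ext_loc (fun z => - / z * (- z ^ 2 * exp (- z ^ 2)))).
    - destruct hl as [-> | ->]; [exists 0 | exists 0]; intros z hz; field; lra.
    - replace (Finite 0) with (Rbar_mult 0 0) by (simpl; f_equal; ring).
      apply is_lim_mult; [| exact hw | simpl; auto].
      replace (Finite 0) with (Rbar_opp 0) by (simpl; f_equal; ring).
      apply is_lim_opp, hinv. }
  apply (is_lim_ext (fun z => p * (z * exp (- z ^ 2)) + q * exp (- z ^ 2))).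
  { intros z. ring. }
  replace (Finite 0) with (Finite (p * 0 + q * 0)) by (f_equal; ring).
  apply is_lim_plus'.
  - exact (is_lim_scal_l _ p _ _ hz).
  - exact (is_lim_scal_l _ q _ _ (is_lim_exp_neg_sqr l hl)).
Qed.

Definition gauss_prim (x : R) : R := RInt (fun s => exp (- s ^ 2)) 0 x.

Definition gauss_param_integrand (x t : R) : R :=
  exp (- (x ^ 2 * (1 + t ^ 2))) / (1 + t ^ 2).

Definition gauss_param (x : R) : R := RInt (gauss_param_integrand x) 0 1.

Lemma continuous_exp_neg_sqr (x : R) : continuous (fun s => exp (- s ^ 2)) x.
Proof.
  apply (ex_derive_continuous (K := R_AbsRing) (V := R_NormedModule)). auto_derive. auto.
Qed.

Lemma ex_RInt_exp_neg_sqr (a b : R) : ex_RInt (fun s => exp (- s ^ 2)) a b.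
Proof.
  apply (ex_RInt_continuous (V := R_CompleteNormedModule)).
  intros; apply continuous_exp_neg_sqr.
Qed.

Lemma is_derive_gauss_prim (x : R) : is_derive gauss_prim x (exp (- x ^ 2)).
Proof.
  apply (is_derive_RInt (fun s => exp (- s ^ 2)) gauss_prim 0 x).
  - apply filter_forall. intros y.
    exact (RInt_correct (V := R_CompleteNormedModule) _ _ _ (ex_RInt_exp_neg_sqr 0 y)).
  - apply continuous_exp_neg_sqr.
Qed.

Lemma gauss_prim_opp (x : R) : gauss_prim (- x) = - gauss_prim x.
Proof.
  unfold gauss_prim.
  assert (h := RInt_comp_lin (V := R_CompleteNormedModule) (fun s => exp (- s ^ 2))
                 (-1) 0 0 x (ex_RInt_exp_neg_sqr _ _)).
  replace (-1 * 0 + 0) with 0 in h by ring. replace (-1 * x + 0) with (- x) in h by ring.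
  rewrite <- h, (RInt_ext _ (fun s => -1 * exp (- s ^ 2))).
  - rewrite (RInt_scal (V := R_CompleteNormedModule)) by apply ex_RInt_exp_neg_sqr.
    unfold scal; simpl; unfold mult; simpl. ring.
  - intros s _. unfold scal; simpl; unfold mult; simpl. do 3 f_equal. ring.
Qed.

Lemma is_derive_gauss_param_integrand (x t : R) :
  is_derive (fun y => gauss_param_integrand y t) x (- 2 * x * exp (- (x ^ 2 * (1 + t ^ 2)))).
Proof.
  unfold gauss_param_integrand. auto_derive; [nra |].
  replace (x * (x * 1) * (1 + t * (t * 1))) with (x ^ 2 * (1 + t ^ 2)) by ring.
  field. nra.
Qed.

Lemma continuity_2d_pt_gauss_param_integrand_derive (x t : R) :
  continuity_2d_pt (fun y s => Derive (fun z => gauss_param_integrand z s) y) x t.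
Proof.
  apply continuity_2d_pt_ext with (f := fun y s => - 2 * y * exp (- (y * y * (1 + s * s)))).
  { intros y s. symmetry. apply is_derive_unique.
    replace (y * y * (1 + s * s)) with (y ^ 2 * (1 + s ^ 2)) by ring.
    apply is_derive_gauss_param_integrand. }
  apply continuity_2d_pt_mult.
  - apply continuity_2d_pt_mult; [apply continuity_2d_pt_const | apply continuity_2d_pt_id1].
  - apply continuity_1d_2d_pt_comp with (f := exp) (g := fun y s => - (y * y * (1 + s * s))).
    + apply derivable_continuous_pt, derivable_pt_exp.
    + apply continuity_2d_pt_opp, continuity_2d_pt_mult.
      * apply continuity_2d_pt_mult; apply continuity_2d_pt_id1.
      * apply continuity_2d_pt_plus; [apply continuity_2d_pt_const |].
        apply continuity_2d_pt_mult; apply continuity_2d_pt_id2.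
Qed.

(* Differentiating under the integral sign and substituting s = x t. *)
Lemma is_derive_gauss_param (x : R) :
  is_derive gauss_param x (- 2 * exp (- x ^ 2) * gauss_prim x).
Proof.
  replace (- 2 * exp (- x ^ 2) * gauss_prim x)
    with (RInt (fun t => Derive (fun y => gauss_param_integrand y t) x) 0 1).
  - apply (is_derive_RInt_param gauss_param_integrand 0 1 x).
    + apply filter_forall. intros y t _. eexists. apply is_derive_gauss_param_integrand.
    + intros t _. apply continuity_2d_pt_gauss_param_integrand_derive.
    + apply filter_forall. intros y.
      apply (ex_RInt_continuous (V := R_CompleteNormedModule)). intros t _.
      apply (ex_derive_continuous (K := R_AbsRing) (V := R_NormedModule)).
      unfold gauss_param_integrand. auto_derive. nra.
  - assert (hpt : forall t, Derive (fun y => gauss_param_integrand y t) x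
                    = - 2 * exp (- x ^ 2) * (x * exp (- (x * t + 0) ^ 2))).
    { intros t. erewrite is_derive_unique by apply is_derive_gauss_param_integrand.
      replace (exp (- (x ^ 2 * (1 + t ^ 2)))) with (exp (- x ^ 2) * exp (- (x * t + 0) ^ 2))
        by (rewrite <- exp_plus; f_equal; ring).
      ring. }
    rewrite (RInt_ext _ _ _ _ (fun t _ => hpt t)).
    rewrite (RInt_scal (V := R_CompleteNormedModule)).
    2:{ apply (ex_RInt_continuous (V := R_CompleteNormedModule)). intros t _.
        apply (ex_derive_continuous (K := R_AbsRing) (V := R_NormedModule)). auto_derive. auto. }
    rewrite (RInt_comp_lin (V := R_CompleteNormedModule) (fun s => exp (- s ^ 2)))
      by apply ex_RInt_exp_neg_sqr.
    unfold gauss_prim, scal; simpl; unfold mult; simpl. f_equal. f_equal; ring.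
Qed.

Lemma gauss_param_0 : gauss_param 0 = PI / 4.
Proof.
  unfold gauss_param. rewrite <- atan_1.
  replace (atan 1) with (atan 1 - atan 0) by (rewrite atan_0; ring).
  apply (is_RInt_unique (V := R_CompleteNormedModule)).
  assert (h0 : forall t, / (1 + t²) = gauss_param_integrand 0 t).
  { intros t. unfold gauss_param_integrand, Rsqr.
    replace (- (0 ^ 2 * (1 + t ^ 2))) with 0 by ring. rewrite exp_0. field. nra. }
  apply (is_RInt_ext (fun t => / (1 + t²))); [intros t _; apply h0 |].
  apply (is_RInt_derive (V := R_CompleteNormedModule)).
  - intros t _. apply is_derive_atan.
  - intros t _. apply (ex_derive_continuous (K := R_AbsRing) (V := R_NormedModule)).
    auto_derive. unfold Rsqr. nra.
Qed.

Lemma gauss_prim_sqr (x : R) : gauss_prim x ^ 2 = PI / 4 - gauss_param x.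
Proof.
  assert (hc : gauss_param x + gauss_prim x ^ 2 = gauss_param 0 + gauss_prim 0 ^ 2).
  { apply (is_derive_0_const (fun y => gauss_param y + gauss_prim y ^ 2)). intros y.
    replace 0 with (- 2 * exp (- y ^ 2) * gauss_prim y + INR 2 * exp (- y ^ 2) * gauss_prim y ^ 1)
      by (simpl; ring).
    apply (is_derive_plus (K := R_AbsRing) (V := R_NormedModule)).
    - apply is_derive_gauss_param.
    - apply (is_derive_pow gauss_prim 2), is_derive_gauss_prim. }
  assert (h0 : gauss_prim 0 = 0) by apply (RInt_point (V := R_CompleteNormedModule)).
  rewrite gauss_param_0, h0 in hc. lra.
Qed.

Lemma gauss_param_bounds (x : R) : 0 <= gauss_param x <= exp (- x ^ 2).
Proof.
  assert (hint : ex_RInt (gauss_param_integrand x) 0 1).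
  { apply (ex_RInt_continuous (V := R_CompleteNormedModule)). intros t _.
    apply (ex_derive_continuous (K := R_AbsRing) (V := R_NormedModule)).
    unfold gauss_param_integrand. auto_derive. nra. }
  assert (hpt : forall t, 0 <= gauss_param_integrand x t <= exp (- x ^ 2)).
  { intros t. unfold gauss_param_integrand.
    assert (hexp : exp (- (x ^ 2 * (1 + t ^ 2))) <= exp (- x ^ 2)).
    { assert (hq : - (x ^ 2 * (1 + t ^ 2)) <= - x ^ 2) by nra.
      destruct (Rle_lt_or_eq_dec _ _ hq) as [hl | ->]; [apply Rlt_le, exp_increasing, hl | lra]. }
    assert (0 < exp (- (x ^ 2 * (1 + t ^ 2)))) by apply exp_pos.
    split.
    - apply Rle_mult_inv_pos; nra.
    - apply Rle_trans with (2 := hexp). apply Rmult_le_reg_r with (1 + t ^ 2); [nra |].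
      unfold Rdiv. rewrite Rmult_assoc, Rinv_l by nra. nra. }
  split.
  - apply RInt_ge_0; [lra | exact hint | intros t _; apply hpt].
  - unfold gauss_param.
    replace (exp (- x ^ 2)) with (RInt (fun _ => exp (- x ^ 2)) 0 1)
      by (rewrite RInt_const; unfold scal; simpl; unfold mult; simpl; ring).
    apply RInt_le; [lra | exact hint | apply ex_RInt_const | intros t _; apply hpt].
Qed.

Lemma is_lim_gauss_prim_p : is_lim gauss_prim p_infty (sqrt PI / 2).
Proof.
  assert (hparam : is_lim gauss_param p_infty 0).
  { apply (is_lim_le_le_loc (fun _ => 0) (fun x => exp (- x ^ 2))).
    - apply filter_forall. apply gauss_param_bounds.
    - apply is_lim_const.
    - apply is_lim_exp_neg_sqr. auto. }
  replace (sqrt PI / 2) with (sqrt (PI / 4 - 0)).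
  2:{ rewrite Rminus_0_r, sqrt_div_alt by lra.
      replace 4 with (2 ^ 2) by ring. rewrite sqrt_pow2 by lra. reflexivity. }
  apply (is_lim_ext_loc (fun x => sqrt (PI / 4 - gauss_param x))).
  - exists 0. intros x hx. rewrite <- gauss_prim_sqr. apply sqrt_pow2.
    apply RInt_ge_0; [lra | apply ex_RInt_exp_neg_sqr | intros; apply Rlt_le, exp_pos].
  - apply is_lim_comp_continuous.
    + apply (is_lim_minus' (fun _ => PI / 4)); [apply is_lim_const | exact hparam].
    + apply (ex_derive_continuous (K := R_AbsRing) (V := R_NormedModule)).
      auto_derive. generalize PI_RGT_0. lra.
Qed.

Lemma is_lim_gauss_prim_m : is_lim gauss_prim m_infty (- (sqrt PI / 2)).
Proof.
  apply (is_lim_ext (fun x => - gauss_prim (- x))).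
  { intros x. rewrite gauss_prim_opp. ring. }
  apply (is_lim_opp (fun x => gauss_prim (- x)) m_infty (sqrt PI / 2)).
  apply (is_lim_comp gauss_prim Ropp m_infty (sqrt PI / 2) p_infty is_lim_gauss_prim_p).
  - apply (is_lim_opp id m_infty m_infty (is_lim_id _)).
  - apply filter_forall. discriminate.
Qed.

Lemma is_derive_gaussian (A M x : R) :
  is_derive (gaussian A M) x (- A * (x - M) * gaussian A M x).
Proof.
  unfold gaussian. auto_derive; [auto |].
  replace ((x + - M) * ((x + - M) * 1)) with ((x - M) ^ 2) by ring. field.
Qed.

Lemma is_derive_gaussian_derive (A M x : R) :
  is_derive (fun y => - A * (y - M) * gaussian A M y) x
    ((A ^ 2 * (x - M) ^ 2 - A) * gaussian A M x).
Proof.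
  unfold gaussian. auto_derive; [auto |].
  replace ((x + - M) * ((x + - M) * 1)) with ((x - M) ^ 2) by ring. field.
Qed.

Lemma continuous_gaussian (A M x : R) : continuous (gaussian A M) x.
Proof.
  apply (ex_derive_continuous (K := R_AbsRing) (V := R_NormedModule)).
  eexists. apply is_derive_gaussian.
Qed.

Lemma gaussian_std (A M y : R) : 0 < A ->
  gaussian A M y = sqrt (A / 2) / sqrt PI * exp (- (sqrt (A / 2) * (y - M)) ^ 2).
Proof.
  intros hA. unfold gaussian.
  replace (A / (2 * PI)) with (A / 2 / PI) by (field; apply PI_neq0).
  rewrite sqrt_div_alt by apply PI_RGT_0.
  rewrite Rpow_mult_distr, pow2_sqrt by lra.
  do 3 f_equal. ring.
Qed.

Lemma is_lim_comp_scaled_shift (f : R -> R) (c M : R) (l L : Rbar) :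
  0 < c -> l = p_infty \/ l = m_infty -> is_lim f l L ->
  is_lim (fun y => f (c * (y - M))) l L.
Proof.
  intros hc hl hf.
  apply (is_lim_ext (fun y => f (c * y + - (c * M)))). { intros y. f_equal. ring. }
  apply is_lim_comp_lin; [| lra].
  replace (Rbar_plus (Rbar_mult c l) (- (c * M))) with l; [exact hf |].
  destruct hl as [-> | ->]; simpl;
    (case Rle_dec; intros; [| lra]); (case Rle_lt_or_eq_dec; intros; [reflexivity | lra]).
Qed.

Definition gaussian_prim (A M y : R) : R := gauss_prim (sqrt (A / 2) * (y - M)) / sqrt PI.

Lemma is_derive_gaussian_prim (A M y : R) : 0 < A ->
  is_derive (gaussian_prim A M) y (gaussian A M y).
Proof.
  intros hA. unfold gaussian_prim. rewrite (gaussian_std A M y hA).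
  replace (sqrt (A / 2) / sqrt PI * exp (- (sqrt (A / 2) * (y - M)) ^ 2))
    with (sqrt (A / 2) * exp (- (sqrt (A / 2) * (y - M)) ^ 2) / sqrt PI)
    by (unfold Rdiv; ring).
  apply (is_derive_scal_l (fun y => gauss_prim (sqrt (A / 2) * (y - M))) y _ (/ sqrt PI)).
  apply (is_derive_comp gauss_prim (fun y => sqrt (A / 2) * (y - M))).
  - apply is_derive_gauss_prim.
  - auto_derive; [auto | ring].
Qed.

Lemma is_lim_gaussian_prim (A M : R) (l : Rbar) (L : R) : 0 < A ->
  l = p_infty \/ l = m_infty -> is_lim gauss_prim l L ->
  is_lim (gaussian_prim A M) l (L / sqrt PI).
Proof.
  intros hA hl hL.
  apply (is_lim_scal_r (fun y => gauss_prim (sqrt (A / 2) * (y - M))) (/ sqrt PI) l L).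
  apply is_lim_comp_scaled_shift; auto. apply sqrt_lt_R0. lra.
Qed.

Lemma is_RInt_gen_gaussian (A M : R) : 0 < A ->
  is_RInt_gen (gaussian A M) (Rbar_locally m_infty) (Rbar_locally p_infty) 1.
Proof.
  intros hA.
  assert (hpi : 0 < sqrt PI) by apply sqrt_lt_R0, PI_RGT_0.
  replace 1 with (sqrt PI / 2 / sqrt PI - - (sqrt PI / 2) / sqrt PI) by (field; lra).
  apply (is_RInt_gen_antiderivative (gaussian_prim A M)).
  - intros y. apply is_derive_gaussian_prim, hA.
  - apply continuous_gaussian.
  - apply is_lim_gaussian_prim; auto. apply is_lim_gauss_prim_m.
  - apply is_lim_gaussian_prim; auto. apply is_lim_gauss_prim_p.
Qed.

Definition gaussian_moment2_prim (A M y : R) : R := - (y + M) * gaussian A M y / A.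

Lemma is_derive_gaussian_moment2_prim (A M y : R) : 0 < A ->
  is_derive (gaussian_moment2_prim A M) y ((y ^ 2 - (M ^ 2 + 1 / A)) * gaussian A M y).
Proof.
  intros hA. unfold gaussian_moment2_prim, gaussian. auto_derive; [auto |].
  replace ((y + - M) * ((y + - M) * 1)) with ((y - M) ^ 2) by ring. field. lra.
Qed.

Lemma is_lim_gaussian_moment2_prim (A M : R) (l : Rbar) : 0 < A ->
  l = p_infty \/ l = m_infty -> is_lim (gaussian_moment2_prim A M) l 0.
Proof.
  intros hA hl.
  assert (hc : 0 < sqrt (A / 2)) by (apply sqrt_lt_R0; lra).
  set (c := sqrt (A / 2)) in *.
  apply (is_lim_ext (fun y => (- (c / sqrt PI) / A)
                        * ((/ c * (c * (y - M)) + 2 * M) * exp (- (c * (y - M)) ^ 2)))).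
  { intros y. unfold gaussian_moment2_prim. rewrite (gaussian_std A M y hA). fold c.
    assert (sqrt PI <> 0) by apply Rgt_not_eq, sqrt_lt_R0, PI_RGT_0.
    field. repeat split; auto; lra. }
  replace (Finite 0) with (Rbar_mult (- (c / sqrt PI) / A) 0) by (simpl; f_equal; ring).
  apply is_lim_scal_l.
  apply (is_lim_comp_scaled_shift (fun z => (/ c * z + 2 * M) * exp (- z ^ 2))); auto.
  apply is_lim_affine_mul_exp_neg_sqr, hl.
Qed.

Lemma is_RInt_gen_gaussian_moment2 (A M : R) : 0 < A ->
  is_RInt_gen (fun y => y ^ 2 * gaussian A M y) (Rbar_locally m_infty) (Rbar_locally p_infty)
    (M ^ 2 + 1 / A).
Proof.
  intros hA.
  set (k := M ^ 2 + 1 / A).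
  assert (hdefect : is_RInt_gen (fun y => (y ^ 2 - k) * gaussian A M y)
                      (Rbar_locally m_infty) (Rbar_locally p_infty) (0 - 0)).
  { apply (is_RInt_gen_antiderivative (gaussian_moment2_prim A M)).
    - intros y. apply is_derive_gaussian_moment2_prim, hA.
    - intros y. apply (ex_derive_continuous (K := R_AbsRing) (V := R_NormedModule)).
      unfold gaussian. auto_derive. auto.
    - apply is_lim_gaussian_moment2_prim; auto.
    - apply is_lim_gaussian_moment2_prim; auto. }
  assert (h := is_RInt_gen_plus (V := R_NormedModule) _ _ _ _
                 (is_RInt_gen_scal (V := R_NormedModule) _ k _ (is_RInt_gen_gaussian A M hA))
                 hdefect).
  replace k with (plus (scal k 1) (0 - 0))
    by (unfold plus, scal; simpl; unfold mult; simpl; ring).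
  eapply is_RInt_gen_ext; [| exact h].
  apply filter_forall. intros _ y _. unfold plus, scal; simpl; unfold mult; simpl. ring.
Qed.

Lemma is_derive_gaussian_time (Af Mf : R -> R) (t dA dM x : R) :
  0 < Af t -> is_derive Af t dA -> is_derive Mf t dM ->
  is_derive (fun s => gaussian (Af s) (Mf s) x) t
    (gaussian (Af t) (Mf t) x
     * (dA / (2 * Af t) - dA / 2 * (x - Mf t) ^ 2 + Af t * dM * (x - Mf t))).
Proof.
  intros hA hdA hdM.
  assert (hpi := PI_RGT_0).
  assert (hq0 : 0 < Af t / (2 * PI)) by (apply Rdiv_lt_0_compat; lra).
  unfold gaussian. auto_derive.
  - repeat split; [eexists; exact hdA | exact hq0 | eexists; exact hdA | eexists; exact hdM].
  - replace (Derive (fun s => Af s) t) with dA by (symmetry; apply is_derive_unique, hdA).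
    replace (Derive (fun s => Mf s) t) with dM by (symmetry; apply is_derive_unique, hdM).
    replace ((x + - Mf t) * ((x + - Mf t) * 1)) with ((x - Mf t) ^ 2) by ring.
    unfold Rdiv in *.
    assert (hq := sqrt_sqrt _ (Rlt_le _ _ hq0)).
    assert (hqp := sqrt_lt_R0 _ hq0).
    set (q := sqrt (Af t * / (2 * PI))) in *.
    set (e := exp (- (Af t * / 2) * (x - Mf t) ^ 2)).
    clearbody q e.
    replace (Af t) with (q * q * (2 * PI)) by (rewrite hq; field; lra).
    field. split; lra.
Qed.

Lemma is_derive_gaussian_ansatz (sigma : R) (Af Mf : R -> R) (t x : R) :
  0 < Af t ->
  is_derive Af t (- 2 * (1 + sigma ^ 2 * Af t ^ 2)) ->
  is_derive Mf t (2 * Mf t / Af t) ->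
  is_derive (fun s => gaussian (Af s) (Mf s) x) t
    (sigma ^ 2 * ((Af t ^ 2 * (x - Mf t) ^ 2 - Af t) * gaussian (Af t) (Mf t) x)
     + (x ^ 2 - (Mf t ^ 2 + 1 / Af t)) * gaussian (Af t) (Mf t) x).
Proof.
  intros hA hdA hdM.
  replace (sigma ^ 2 * ((Af t ^ 2 * (x - Mf t) ^ 2 - Af t) * gaussian (Af t) (Mf t) x)
           + (x ^ 2 - (Mf t ^ 2 + 1 / Af t)) * gaussian (Af t) (Mf t) x)
    with (gaussian (Af t) (Mf t) x
          * (- 2 * (1 + sigma ^ 2 * Af t ^ 2) / (2 * Af t)
             - - 2 * (1 + sigma ^ 2 * Af t ^ 2) / 2 * (x - Mf t) ^ 2
             + Af t * (2 * Mf t / Af t) * (x - Mf t)))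
    by (field; lra).
  apply is_derive_gaussian_time; assumption.
Qed.

Lemma lifespan_bounds (sigma a t : R) :
  0 < sigma -> 0 < a -> 0 <= t < atan (a * sigma) / (2 * sigma) ->
  0 < cos (2 * sigma * t) /\ 0 <= tan (2 * sigma * t) < a * sigma.
Proof.
  intros hs ha [ht0 ht].
  assert (hb := atan_bound (a * sigma)).
  assert (hx : 2 * sigma * t < atan (a * sigma)).
  { apply Rmult_lt_compat_l with (r := 2 * sigma) in ht; [| lra].
    replace (2 * sigma * (atan (a * sigma) / (2 * sigma))) with (atan (a * sigma)) in ht
      by (field; lra).
    exact ht. }
  assert (hx0 : 0 <= 2 * sigma * t) by nra.
  split; [apply cos_gt_0; lra | split].
  - destruct (Rle_lt_or_eq_dec _ _ hx0) as [hl | he].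
    + apply Rlt_le, tan_gt_0; lra.
    + rewrite <- he, tan_0. lra.
  - rewrite <- (tan_atan (a * sigma)). apply tan_increasing; lra.
Qed.

Lemma a_t_pos (sigma a t : R) :
  0 < sigma -> 0 < a -> 0 <= t < atan (a * sigma) / (2 * sigma) -> 0 < a_t sigma a t.
Proof.
  intros hs ha ht. destruct (lifespan_bounds sigma a t hs ha ht) as [_ htan].
  assert (0 < a * sigma) by nra.
  unfold a_t. apply Rdiv_lt_0_compat; [lra | apply Rmult_lt_0_compat; nra].
Qed.

Lemma is_derive_a_t (sigma a t : R) :
  0 < sigma -> 0 < a -> 0 <= t < atan (a * sigma) / (2 * sigma) ->
  is_derive (a_t sigma a) t (- 2 * (1 + sigma ^ 2 * a_t sigma a t ^ 2)).
Proof.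
  intros hs ha ht. destruct (lifespan_bounds sigma a t hs ha ht) as [hc htan].
  assert (0 < a * sigma) by nra.
  assert (h1 : 1 + a * sigma * tan (2 * sigma * t) <> 0) by nra.
  set (moebius := fun tau => (a * sigma - tau) / (sigma * (1 + a * sigma * tau))).
  apply (is_derive_ext (fun s => moebius (tan (2 * sigma * s)))); [reflexivity |].
  replace (- 2 * (1 + sigma ^ 2 * a_t sigma a t ^ 2))
    with (2 * sigma * (tan (2 * sigma * t) ^ 2 + 1)
          * (- (1 + a ^ 2 * sigma ^ 2) / (sigma * (1 + a * sigma * tan (2 * sigma * t)) ^ 2)))
    by (unfold a_t; field; split; lra).
  apply (is_derive_comp moebius (fun s => tan (2 * sigma * s))).
  - unfold moebius. auto_derive; [nra |]. field. split; lra.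
  - apply (is_derive_comp tan (fun s => 2 * sigma * s)).
    + apply is_derive_tan. lra.
    + auto_derive; [auto | ring].
Qed.

Lemma is_derive_m_t (sigma a m t : R) :
  0 < sigma -> 0 < a -> 0 <= t < atan (a * sigma) / (2 * sigma) ->
  is_derive (m_t sigma a m) t (2 * m_t sigma a m t / a_t sigma a t).
Proof.
  intros hs ha ht. destruct (lifespan_bounds sigma a t hs ha ht) as [hc htan].
  assert (hsin : sin (2 * sigma * t) = tan (2 * sigma * t) * cos (2 * sigma * t))
    by (unfold tan; field; lra).
  assert (0 < a * sigma) by nra.
  assert (hcs : 0 < cos (2 * sigma * t) + a * sigma * sin (2 * sigma * t)).
  { replace (cos (2 * sigma * t) + a * sigma * sin (2 * sigma * t))
      with (cos (2 * sigma * t) * (1 + a * sigma * tan (2 * sigma * t))) by (rewrite hsin; ring).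
    apply Rmult_lt_0_compat; nra. }
  assert (hden : 0 < a * sigma * cos (2 * sigma * t) - sin (2 * sigma * t)).
  { replace (a * sigma * cos (2 * sigma * t) - sin (2 * sigma * t))
      with (cos (2 * sigma * t) * (a * sigma - tan (2 * sigma * t))) by (rewrite hsin; ring).
    apply Rmult_lt_0_compat; lra. }
  unfold m_t, a_t. auto_derive; [lra |].
  unfold tan. field. repeat split; lra.
Qed.

Lemma is_derive_u_explicit (sigma a m t x : R) :
  0 < sigma -> 0 < a -> 0 <= t < atan (a * sigma) / (2 * sigma) ->
  is_derive (fun s => u_explicit sigma a m s x) t
    (sigma ^ 2 * ((a_t sigma a t ^ 2 * (x - m_t sigma a m t) ^ 2 - a_t sigma a t)
                  * u_explicit sigma a m t x)
     + (x ^ 2 - (m_t sigma a m t ^ 2 + 1 / a_t sigma a t)) * u_explicit sigma a m t x).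
Proof.
  intros hs ha ht. apply is_derive_gaussian_ansatz.
  - apply a_t_pos; assumption.
  - apply is_derive_a_t; assumption.
  - apply is_derive_m_t; assumption.
Qed.

Lemma u_explicit_0 (sigma a m x : R) :
  0 < sigma -> 0 < a -> u_explicit sigma a m 0 x = u0 a m x.
Proof.
  intros hs ha. unfold u_explicit, u0, a_t, m_t.
  replace (2 * sigma * 0) with 0 by ring. rewrite tan_0, sin_0, cos_0.
  f_equal; field; lra.
Qed.

Theorem proposition3p2 (sigma a m : R) :
  0 < sigma -> 0 < a ->
  is_solution sigma (atan (a * sigma) / (2 * sigma)) (u0 a m) (u_explicit sigma a m) /\
  (forall t, 0 < t < atan (a * sigma) / (2 * sigma) -> 0 < a_t sigma a t).
Proof.
  intros hs ha.
  assert (hT : 0 < atan (a * sigma) / (2 * sigma)).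
  { apply Rdiv_lt_0_compat; [| lra]. rewrite <- atan_0. apply atan_increasing. nra. }
  split; [split; [| split] |].
  - intros x. apply u_explicit_0; assumption.
  - intros x. rewrite <- (u_explicit_0 sigma a m x hs ha).
    assert (hcont : continuous (fun s => u_explicit sigma a m s x) 0).
    { apply (ex_derive_continuous (K := R_AbsRing) (V := R_NormedModule)).
      eexists. apply is_derive_u_explicit; auto; lra. }
    eapply filterlim_filter_le_1; [apply filter_le_within | exact hcont].
  - intros t ht.
    set (A := a_t sigma a t). set (M := m_t sigma a m t).
    exists (M ^ 2 + 1 / A), (fun y => - A * (y - M) * gaussian A M y),
      (fun y => (A ^ 2 * (y - M) ^ 2 - A) * gaussian A M y).
    split; [| split; [| split]].
    + apply is_RInt_gen_gaussian_moment2, a_t_pos; auto; lra.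
    + intros x. apply is_derive_gaussian.
    + intros x. apply is_derive_gaussian_derive.
    + intros x. apply is_derive_u_explicit; auto; lra.
  - intros t ht. apply a_t_pos; auto; lra.
Qed.
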